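(* Let $p$ be a prime and $A_*$ a graded commutative $\mathbb F_p$-algebra. Then $[G_p(A_* ),G_p(A_* )]\subset G_p^{(0.5)}(A_* )$; $[G_p^{(0.5)}(A_* ),G_p^{(0.5)}(A_* )]\subset G_p^{(2)}(A_* )$; $[G_p^{(k)}(A_* ),G_p^{(k)}(A_* )]\subset G_p^{(k+2)}(A_* )$ for every positive integer $k$; $[G_p^{(k)}(A_* ),G_p(A_* )]\subset G_p^{(k+0.5)}(A_* )$ for every non-negative integer $k$; $[G_p^{(k+0.5)}(A_* ),G_p(A_* )]\subset G_p^{(k+1.5)}(A_* )$ for every non-negative integer $k$.
   Context: Graded commutative means $ab=(-1)^{\deg a\deg b}ba$. If $p=2$, $G_2(A_* )$ is the set of power series $\alpha(X)=\sum_{i\ge0}\alpha_iX^{2^i}\in A_*[[X]]$ ($X$ of degree $-1$) with $\alpha_i\in A_{2^i-1}$ and $\alpha_0=1$; in this case put $\epsilon=0$. If $p$ is odd, let $\epsilon$ have degree $-1$ with $\epsilon^2=0$, $X$ degree $-2$, and $G_p(A_* )$ is the set of $\alpha(X)=\sum_{i\ge0}\alpha_iX^{p^i}\in (A_*\otimes_{\mathbb F_p}\mathbb F_p[\epsilon]/(\epsilon^2))[[X]]$ with $\alpha_i$ homogeneous of degree $2(p^i-1)$ and $\alpha_0-1\in(\epsilon)$. The group law is $\alpha(X)\cdot\beta(X)=\beta(\alpha(X))$ (coefficient of $X^{p^i}$ equal to $\sum_{j=0}^i\alpha_{i-j}^{p^j}\beta_j$); the identity is $X$. For an integer $k\ge0$,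 $G_p^{(k)}(A_* )$ is the subgroup of elements of the form $X+\sum_{i\ge k+1}\alpha_iX^{p^i}$, and $G_p^{(k+0.5)}(A_* )$ the subgroup of elements of the form $X+\sum_{i\ge k+1}\alpha_iX^{p^i}$ with $\alpha_{k+1}\in(\epsilon)$. $[H,K]$ denotes the subgroup generated by commutators $h^{-1}k^{-1}hk$. *)

From HB Require Import structures.
From mathcomp Require Import all_boot all_order all_algebra.
Set Implicit Arguments. Unset Strict Implicit. Unset Printing Implicit Defensive.
Import Order.TTheory GRing.Theory Num.Theory.
Local Open Scope ring_scope.

Record graded_comm_Fp_alg (p : nat) (R : nzRingType) (A : int -> {pred R}) : Prop := {
  gc_char : p \in [pchar R];
  gc_zero : forall n, 0 \in A n;
  gc_sub : forall n x y, x \in A n -> y \in A n -> x - y \in A n;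
  gc_one : 1 \in A 0;
  gc_mul : forall m n x y, x \in A m -> y \in A n -> x * y \in A (m + n);
  gc_comm : forall m n x y, x \in A m -> y \in A n ->
              x * y = (-1) ^+ (absz (m * n)) * (y * x);
  gc_span : forall x : R, exists (s : seq int) (f : int -> R),
              [/\ uniq s, (forall n, f n \in A n) & x = \sum_(n <- s) f n];
  gc_indep : forall (s : seq int) (f : int -> R), uniq s ->
              (forall n, f n \in A n) -> \sum_(n <- s) f n = 0 ->
              forall n, n \in s -> f n = 0
}.

(* Elements of A_star (x) F_p[eps]/(eps^2): the pair (a, b) stands for a + b eps.
   All coefficients we use have even total degree, hence are central, so the
   ordinary (ungraded) product formula is the correct one. *)
Definition dmul (R : nzRingType) (x y : (R * R)%type) : (R * R)%type :=
  (x.1 * y.1, x.1 * y.2 + x.2 * y.1).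

Definition dexp (R : nzRingType) (x : (R * R)%type) (n : nat) : (R * R)%type :=
  iter n (dmul x) (1, 0).

(* A power series alpha(X) = sum_i alpha_i X^(p^i) is represented by its
   coefficient sequence i |-> alpha_i. *)
Definition pseries (R : nzRingType) := nat -> (R * R)%type.

Definition coef_ok (p : nat) (R : nzRingType) (A : int -> {pred R}) (i : nat)
  (x : (R * R)%type) : Prop :=
  if p == 2%N then x.1 \in A (Posz (2 ^ i).-1) /\ x.2 = 0
  else x.1 \in A (Posz (2 * (p ^ i).-1)) /\ x.2 \in A (Posz (2 * (p ^ i).-1).+1).

Definition inG (p : nat) (R : nzRingType) (A : int -> {pred R}) (a : pseries R) : Prop :=
  (a 0%N).1 = 1 /\ forall i, coef_ok p A i (a i).

(* group law: (a . b)_i = sum_{j=0}^i a_{i-j}^{p^j} b_j, i.e. b(a(X)) *)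
Definition gmul (p : nat) (R : nzRingType) (a b : pseries R) : pseries R :=
  fun i => (\sum_(j < i.+1) (dmul (dexp (a (i - j)%N) (p ^ j)) (b j)).1,
            \sum_(j < i.+1) (dmul (dexp (a (i - j)%N) (p ^ j)) (b j)).2).

Definition gone (R : nzRingType) : pseries R :=
  fun i => if i == 0%N then (1, 0) else (0, 0).

Definition is_ginv (p : nat) (R : nzRingType) (A : int -> {pred R}) (a b : pseries R) : Prop :=
  [/\ inG p A a, inG p A b, gmul p a b = gone R & gmul p b a = gone R].

Definition subgroupG (p : nat) (R : nzRingType) (A : int -> {pred R})
  (S : pseries R -> Prop) : Prop :=
  [/\ forall a, S a -> inG p A a,
      S (gone R),
      forall a b, S a -> S b -> S (gmul p a b)
    & forall a b, S a -> is_ginv p A a b -> S b].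

Definition gen_subgroup (p : nat) (R : nzRingType) (A : int -> {pred R})
  (X : pseries R -> Prop) (a : pseries R) : Prop :=
  forall S, subgroupG p A S -> (forall x, X x -> S x) -> S a.

Definition commutators (p : nat) (R : nzRingType) (A : int -> {pred R})
  (H K : pseries R -> Prop) (c : pseries R) : Prop :=
  exists h k hi ki, [/\ H h, K k, is_ginv p A h hi, is_ginv p A k ki &
    c = gmul p (gmul p (gmul p hi ki) h) k].

Definition commG (p : nat) (R : nzRingType) (A : int -> {pred R})
  (H K : pseries R -> Prop) : pseries R -> Prop :=
  gen_subgroup p A (commutators p A H K).

Definition Gk (p : nat) (R : nzRingType) (A : int -> {pred R}) (k : nat)
  (a : pseries R) : Prop :=
  [/\ inG p A a, a 0%N = (1, 0) & forall i, (1 <= i <= k)%N -> a i = (0, 0)].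

Definition Gkh (p : nat) (R : nzRingType) (A : int -> {pred R}) (k : nat)
  (a : pseries R) : Prop :=
  Gk p A k a /\ (a k.+1).1 = 0.

Definition subsetP_ (T : Type) (X Y : T -> Prop) : Prop := forall x, X x -> Y x.

From HB Require Import structures.
From mathcomp Require Import all_boot all_order all_algebra.
From mathcomp Require Import zify.
Set Implicit Arguments. Unset Strict Implicit. Unset Printing Implicit Defensive.
Import GRing.Theory.
Local Open Scope ring_scope.

(* On each
   group considered, the coefficients that have to vanish are additive (the
   eps-part of a_0 and the eps-free part of a_1 on G_p, a_i for 0 < i <= k+2 on
   G_p^(k) with k > 0, and for 0 < i <= 2 on G_p^(0.5)), and an additive
   function kills commutators.  For h in G_p^(k), multiplying by h changes only
   the coefficient of index k+1, by h_(k+1) twisted by the constant term of the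
   other factor; on the right the twist is trivial, as (1 + z eps)^p = 1 in
   characteristic p.  Hence h^-1 g^-1 h g is in G_p^(k), with coefficient
   ((h^-1)_(k+1) (g^-1)_0 + h_(k+1)) g_0 of index k+1, which lies in (eps) and
   is 0 if h_(k+1) does; then h is in G_p^(k+1) modulo eps, and the same
   computation modulo eps gives the coefficient of index k+2. *)

Section DualNumbers.
Variable R : nzRingType.
Implicit Types x : (R * R)%type.

Lemma dmul1l x : dmul (1, 0) x = x.
Proof. by case: x => a b; rewrite /dmul /= !mul1r mul0r addr0. Qed.

Lemma dmul1r x : dmul x (1, 0) = x.
Proof. by case: x => a b; rewrite /dmul /= !mulr1 mulr0 add0r. Qed.

Lemma dmul0l x : dmul (0, 0) x = (0, 0).
Proof. by rewrite /dmul /= !mul0r addr0. Qed.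

Lemma dmul0r x : dmul x (0, 0) = (0, 0).
Proof. by rewrite /dmul /= !mulr0 addr0. Qed.

Lemma dmulDl x y z : dmul (x + y) z = dmul x z + dmul y z.
Proof. by rewrite /dmul /= !mulrDl addrACA. Qed.

Lemma dmul_nil_unit x (z : R) : x.1 = 0 -> dmul x (1, z) = x.
Proof. by case: x => a b /= ->; rewrite /dmul /= !mul0r mulr1 add0r. Qed.

Lemma dexp1 x : dexp x 1 = x.
Proof. exact: dmul1r. Qed.

Lemma dexpS x n : dexp x n.+1 = dmul x (dexp x n).
Proof. by rewrite /dexp iterS. Qed.

Lemma dexp_fst x n : (dexp x n).1 = x.1 ^+ n.
Proof. by elim: n => [|n IH]; rewrite ?expr0 // dexpS /= IH exprS. Qed.

Lemma dexp_snd_eq0 x n : x.2 = 0 -> (dexp x n).2 = 0.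
Proof. by move=> x2; elim: n => // n IH; rewrite dexpS /= IH x2 mulr0 mul0r addr0. Qed.

Lemma dexp_unit (z : R) n : dexp (1, z) n = (1, z *+ n).
Proof.
elim: n => [|n IH]; first by rewrite mulr0n.
by rewrite dexpS IH /dmul /= !mul1r mulr1 mulrS addrC.
Qed.

Lemma dexp1n n : dexp ((1, 0) : R * R) n = (1, 0).
Proof. by rewrite dexp_unit mul0rn. Qed.

Lemma dexp_nil (y : R) n : (1 < n)%N -> dexp (0, y) n = (0, 0).
Proof.
move=> /subnKC <-; elim: (n - 2)%N => [|m IH]; last by rewrite addnS dexpS IH dmul0r.
by rewrite /dexp /= /dmul /= !(mul0r, mulr0, addr0).
Qed.

End DualNumbers.

Section Composition.
Variables (R : nzRingType) (p : nat).
Implicit Types a b : pseries R.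

Lemma gmulE a b i :
  gmul p a b i = \sum_(j < i.+1) dmul (dexp (a (i - j)%N) (p ^ j)) (b j).
Proof. by rewrite [RHS]surjective_pairing !raddf_sum. Qed.

Lemma gmul0 a b : gmul p a b 0 = dmul (a 0%N) (b 0%N).
Proof. by rewrite gmulE big_ord1 subnn expn0 dexp1. Qed.

Lemma gmul_ends a b i : (0 < i)%N ->
  (forall j, (0 < j < i)%N -> dmul (dexp (a (i - j)%N) (p ^ j)) (b j) = (0, 0)) ->
  gmul p a b i = dmul (a i) (b 0%N) + dmul (dexp (a 0%N) (p ^ i)) (b i).
Proof.
case: i => // i _ mid; rewrite gmulE big_ord_recl big_ord_recr big1 => [|j _].
  by rewrite subn0 expn0 dexp1 lift0 subnn /= add0r.
by rewrite mid // lift0 /= ltnS ltn_ord.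
Qed.

Lemma gmul_cong a a' b b' i :
  (forall j, (j <= i)%N -> a j = a' j) -> (forall j, (j <= i)%N -> b j = b' j) ->
  gmul p a b i = gmul p a' b' i.
Proof.
move=> eq_a eq_b; rewrite !gmulE; apply: eq_bigr => j _.
by rewrite eq_a ?leq_subr // eq_b // -ltnS.
Qed.

Lemma gmul_lead_cong a a' b i : (forall j, (j < i)%N -> a j = a' j) ->
  gmul p a b i - dmul (a i) (b 0%N) = gmul p a' b i - dmul (a' i) (b 0%N).
Proof.
move=> eq_a; rewrite !gmulE !big_ord_recl !subn0 expn0 !dexp1.
rewrite addrAC subrr add0r [RHS]addrAC subrr add0r.
apply: eq_bigr => j _; rewrite eq_a // lift0.
by have := ltn_ord j; lia.
Qed.

End Composition.

(* a = X + sum_(i > m) a_i X^(p^i), i.e. G_p^(m) without the degree conditions *)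
Definition id_upto (R : nzRingType) (m : nat) (a : pseries R) : Prop :=
  a 0%N = (1, 0) /\ forall j, (0 < j <= m)%N -> a j = (0, 0).

Definition gcomm (p : nat) (R : nzRingType) (hi ki h k : pseries R) : pseries R :=
  gmul p (gmul p (gmul p hi ki) h) k.

Section NearIdentity.
Variables (R : nzRingType) (p : nat).
Hypothesis p_gt1 : (1 < p)%N.
Implicit Types a b h u : pseries R.

Lemma gone_gt0 i : (0 < i)%N -> gone R i = (0, 0).
Proof. by case: i. Qed.

Lemma id_uptoE m a : id_upto m a <-> forall j, (j <= m)%N -> a j = gone R j.
Proof.
split=> [[a0 az] [|j] jm // | a_id]; first by rewrite az.
by split=> [|j /andP [j0 jm]]; rewrite a_id // gone_gt0.
Qed.

Lemma id_uptoS m a : id_upto m a -> a m.+1 = (0, 0) -> id_upto m.+1 a.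
Proof.
move=> [a0 az] a1; split=> // j /andP [j0]; rewrite leq_eqVlt ltnS.
by case/orP=> [/eqP -> // | jm]; apply: az; rewrite j0 jm.
Qed.

Lemma dexp_nil_pow (y : R) j : (0 < j)%N -> dexp (0, y) (p ^ j) = (0, 0).
Proof. by move=> j0; apply/dexp_nil/(leq_ltn_trans j0 (ltn_expl _ p_gt1)). Qed.

Lemma gmul_id_upto_lead_l h u m i : id_upto m h -> (0 < i <= m.+1)%N ->
  gmul p h u i = dmul (h i) (u 0%N) + u i.
Proof.
move=> [h0 hz] /andP [i0 im]; rewrite gmul_ends // => [|j /andP [j0 ji]].
  by rewrite h0 dexp1n dmul1l.
by rewrite hz ?dexp_nil_pow ?dmul0l //; lia.
Qed.

Lemma gmul_id_upto_l h u m i : id_upto m h -> (i <= m)%N -> gmul p h u i = u i.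
Proof.
case: i => [[h0 _] _ | i [h0 hz] im]; first by rewrite gmul0 h0 dmul1l.
rewrite (gmul_id_upto_lead_l _ (conj h0 hz)) ?hz ?dmul0l ?add0r //; lia.
Qed.

Lemma gmul_id_upto_lead_r h u m i : id_upto m h -> (0 < i <= m.+1)%N ->
  gmul p u h i = u i + dmul (dexp (u 0%N) (p ^ i)) (h i).
Proof.
move=> [h0 hz] /andP [i0 im]; rewrite gmul_ends // => [|j /andP [j0 ji]].
  by rewrite h0 dmul1r.
by rewrite hz ?dmul0r //; lia.
Qed.

Lemma gmul_id_upto_r h u m i : id_upto m h -> (i <= m)%N -> gmul p u h i = u i.
Proof.
case: i => [[h0 _] _ | i [h0 hz] im]; first by rewrite gmul0 h0 dmul1r.
rewrite (gmul_id_upto_lead_r _ (conj h0 hz)) ?hz ?dmul0r ?addr0 //; lia.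
Qed.

Lemma id_upto_inv m h hi : id_upto m h -> gmul p h hi =1 gone R -> id_upto m hi.
Proof.
by move=> h_id hhi; apply/id_uptoE => j jm; rewrite -(gmul_id_upto_l _ h_id jm).
Qed.

Lemma id_upto_inv_lead m h hi : id_upto m h -> gmul p h hi =1 gone R ->
  h m.+1 + hi m.+1 = (0, 0).
Proof.
move=> h_id hhi; have [hi0 _] := id_upto_inv h_id hhi.
by have := hhi m.+1; rewrite (gmul_id_upto_lead_l _ h_id) ?leqnn // hi0 dmul1r.
Qed.

Lemma gmul_id_upto_add k a b i : (0 < k)%N -> id_upto k a -> id_upto k b ->
  (0 < i <= k.+2)%N -> gmul p a b i = a i + b i.
Proof.
move=> k0 [a0 az] [b0 bz] /andP [i0 ik]; rewrite gmul_ends // => [|j /andP [j0 ji]].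
  by rewrite b0 dmul1r a0 dexp1n dmul1l.
have [jk|kj] := leqP j k; first by rewrite bz ?j0 // dmul0r.
rewrite az ?dexp_nil_pow ?dmul0l //; lia.
Qed.

Lemma gmul_eps_add a b i : a 0%N = (1, 0) -> b 0%N = (1, 0) -> (a 1%N).1 = 0 ->
  (0 < i <= 2)%N -> gmul p a b i = a i + b i.
Proof.
move=> a0 b0 a1 /andP [i0 i2]; rewrite gmul_ends // => [|j /andP [j0 ji]].
  by rewrite b0 dmul1r a0 dexp1n dmul1l.
have [-> ->] : j = 1%N /\ (i - j = 1)%N by lia.
by rewrite [a 1%N]surjective_pairing a1 dexp_nil_pow ?dmul0l.
Qed.

Hypothesis pchar : p%:R = 0 :> R.

Lemma dexp_pchar (z : R) n : dexp (1, z) (p ^ n.+1) = (1, 0).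
Proof. by rewrite dexp_unit -mulr_natr natrX pchar expr0n mulr0. Qed.

Lemma gcomm_id_upto m h hi k ki :
  id_upto m h -> gmul p h hi =1 gone R -> gmul p ki k =1 gone R -> (ki 0%N).1 = 1 ->
  id_upto m (gcomm p hi ki h k) /\
  gcomm p hi ki h k m.+1 = dmul (dmul (hi m.+1) (ki 0%N) + h m.+1) (k 0%N).
Proof.
move=> h_id hhi kik ki0; have hi_id := id_upto_inv h_id hhi.
rewrite /gcomm; set u := gmul p hi ki; set v := gmul p u h.
have uE j : (j <= m)%N -> u j = ki j by apply: gmul_id_upto_l.
have vE j : (j <= m)%N -> v j = ki j.
  by move=> jm; rewrite /v (gmul_id_upto_r _ h_id) ?uE.
split.
  apply/id_uptoE => j jm; rewrite -kik; apply: gmul_cong => // l lj.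
  exact/vE/(leq_trans lj).
have u_lead : u m.+1 = dmul (hi m.+1) (ki 0%N) + ki m.+1.
  by rewrite /u (gmul_id_upto_lead_l _ hi_id) ?leqnn.
have v_lead : v m.+1 = u m.+1 + h m.+1.
  rewrite /v (gmul_id_upto_lead_r _ h_id) ?leqnn // (uE 0%N) //.
  by rewrite [ki 0%N]surjective_pairing ki0 dexp_pchar dmul1l.
have := gmul_lead_cong p k (a := v) (a' := ki) (i := m.+1) vE.
rewrite kik sub0r => /eqP; rewrite subr_eq => /eqP ->.
by rewrite v_lead u_lead !dmulDl addrC addrAC addrK.
Qed.

Lemma gcomm_lead_fst m h hi k ki :
  id_upto m h -> gmul p h hi =1 gone R -> gmul p ki k =1 gone R ->
  (ki 0%N).1 = 1 -> (k 0%N).1 = 1 -> (gcomm p hi ki h k m.+1).1 = 0.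
Proof.
move=> h_id hhi kik ki0 k0; have [_ ->] := gcomm_id_upto h_id hhi kik ki0.
rewrite /dmul /= ki0 k0 !mulr1 addrC.
exact: (congr1 fst (id_upto_inv_lead h_id hhi)).
Qed.

Lemma gcomm_lead_eq0 m h hi k ki :
  id_upto m h -> gmul p h hi =1 gone R -> gmul p ki k =1 gone R ->
  (ki 0%N).1 = 1 -> (h m.+1).1 = 0 -> gcomm p hi ki h k m.+1 = (0, 0).
Proof.
move=> h_id hhi kik ki0 h1; have [_ ->] := gcomm_id_upto h_id hhi kik ki0.
have hiE : hi m.+1 = - h m.+1.
  by apply/eqP; rewrite -addr_eq0 addrC; apply/eqP/(id_upto_inv_lead h_id hhi).
rewrite hiE [ki 0%N]surjective_pairing ki0 dmul_nil_unit ?addNr ?dmul0l //=.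
by rewrite h1 oppr0.
Qed.

End NearIdentity.

Definition mod_eps (R : nzRingType) (a : pseries R) : pseries R := fun i => ((a i).1, 0).

Section ReductionModEps.
Variables (R : nzRingType) (p : nat).
Implicit Types a b h : pseries R.

Lemma mod_eps_gmul a b : mod_eps (gmul p a b) =1 gmul p (mod_eps a) (mod_eps b).
Proof.
move=> i; rewrite /mod_eps [RHS]surjective_pairing /gmul /=; congr (_, _).
  by apply: eq_bigr => j _; rewrite /dmul /= !dexp_fst.
by symmetry; apply: big1 => j _; rewrite /dmul /= dexp_snd_eq0 // mulr0 mul0r addr0.
Qed.

Lemma mod_eps_inv a b : gmul p a b =1 gone R -> gmul p (mod_eps a) (mod_eps b) =1 gone R.
Proof. by move=> ab i; rewrite -mod_eps_gmul /mod_eps ab; case: i. Qed.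

Lemma gcomm_mod_eps_fst hi ki h k i : (gcomm p hi ki h k i).1 =
  (gcomm p (mod_eps hi) (mod_eps ki) (mod_eps h) (mod_eps k) i).1.
Proof.
rewrite /gcomm -[LHS]/(mod_eps _ i).1 mod_eps_gmul; congr fst.
apply: gmul_cong => // j _; rewrite mod_eps_gmul.
by apply: gmul_cong => // l _; rewrite mod_eps_gmul.
Qed.

Lemma mod_eps_id_upto m h : id_upto m h -> (h m.+1).1 = 0 -> id_upto m.+1 (mod_eps h).
Proof.
move=> [h0 hz] h1; apply: id_uptoS; last by rewrite /mod_eps h1.
by split=> [|j /hz]; rewrite /mod_eps ?h0 // => ->.
Qed.

End ReductionModEps.

Section Graded.
Variables (R : nzRingType) (p : nat) (A : int -> {pred R}).
Hypothesis gA : graded_comm_Fp_alg p A.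

Lemma homogD n x y : x \in A n -> y \in A n -> x + y \in A n.
Proof.
move=> xA yA; have -> : x + y = x - (0 - y) by rewrite sub0r opprK.
exact/(gc_sub gA xA)/(gc_sub gA (gc_zero gA n) yA).
Qed.

Lemma homogM m n k x y : x \in A m -> y \in A n -> m + n = k -> x * y \in A k.
Proof. by move=> xA yA <-; apply: gc_mul gA _ _ _ _ xA yA. Qed.

Definition coef_deg (i : nat) : int := Posz ((if p == 2%N then 1 else 2) * (p ^ i).-1)%N.

Definition dhomog (d : int) (x : R * R) : Prop :=
  [/\ x.1 \in A d, x.2 \in A (d + 1) & p = 2%N -> x.2 = 0].

Lemma coef_okE i x : coef_ok p A i x <-> dhomog (coef_deg i) x.
Proof.
rewrite /coef_ok /dhomog /coef_deg; case: (p =P 2%N) => [p2 | np2].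
  rewrite p2 mul1n; split=> [[x1 x2] | [x1 _ x2]].
    by split=> //; rewrite x2; apply: gc_zero gA _.
  by split=> //; apply: x2.
have -> : Posz ((2 * (p ^ i).-1).+1)%N = Posz (2 * (p ^ i).-1)%N + 1.
  by rewrite -addn1 PoszD.
by split=> [[x1 x2] | [x1 x2 _]].
Qed.

Lemma dhomog_sum d I r (P : pred I) (F : I -> R * R) :
  (forall i, P i -> dhomog d (F i)) -> dhomog d (\sum_(i <- r | P i) F i).
Proof.
move=> FA; elim/big_ind: _ => //; last by move=> x y [x1 x2 x0] [y1 y2 y0];
  split; rewrite ?homogD // => p2; rewrite /= x0 ?y0 ?addr0.
by split=> //=; apply: gc_zero gA _.
Qed.

Lemma dhomog_dmul d e x y : dhomog d x -> dhomog e y -> dhomog (d + e) (dmul x y).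
Proof.
move=> [x1 x2 x0] [y1 y2 y0]; split=> /=.
- exact: homogM x1 y1 _.
- apply: homogD; first by apply: homogM x1 y2 _; rewrite addrA.
  by apply: homogM x2 y1 _; rewrite addrAC.
- by move=> p2; rewrite x0 ?y0 // mulr0 mul0r addr0.
Qed.

Lemma dhomog_dexp d x n : dhomog d x -> dhomog (d * n%:Z) (dexp x n).
Proof.
move=> xd; elim: n => [|n IH].
  by rewrite mulr0; split=> //; [apply: gc_one gA | apply: gc_zero gA _].
by rewrite dexpS intS mulrDr mulr1; apply: dhomog_dmul.
Qed.

Lemma coef_deg_comp i j : (0 < p)%N -> (j <= i)%N ->
  coef_deg (i - j) * (p ^ j)%N%:Z + coef_deg j = coef_deg i.
Proof.
move=> p0 ji; rewrite /coef_deg -PoszM -PoszD; congr Posz.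
have -> : (p ^ i = p ^ (i - j) * p ^ j)%N by rewrite -expnD subnK.
have := expn_gt0 p (i - j); have := expn_gt0 p j; rewrite p0 /=.
move: (p ^ (i - j))%N (p ^ j)%N => x y y0 x0; case: (p == 2%N); nia.
Qed.

Lemma inG_gmul a b : (0 < p)%N -> inG p A a -> inG p A b -> inG p A (gmul p a b).
Proof.
move=> p0 [a0 a_ok] [b0 b_ok]; split; first by rewrite gmul0 /dmul /= a0 b0 mulr1.
move=> i; apply/coef_okE; rewrite gmulE; apply: dhomog_sum => j _.
rewrite -(coef_deg_comp (i := i) p0 (ltn_ord j)).
by apply: dhomog_dmul; [apply: dhomog_dexp | ]; apply/coef_okE.
Qed.

Lemma inG_gone : inG p A (gone R).
Proof.
split=> // i; apply/coef_okE; case: i => [|i]; split=> //=; try exact: gc_zero gA _.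
by rewrite /coef_deg expn0 muln0; apply: gc_one gA.
Qed.

End Graded.

Lemma commG_sub (R : nzRingType) (p : nat) (A : int -> {pred R}) H K T :
  subgroupG p A T ->
  (forall h k hi ki, H h -> K k -> is_ginv p A h hi -> is_ginv p A k ki ->
     T (gcomm p hi ki h k)) ->
  subsetP_ (commG p A H K) T.
Proof.
move=> sT HK_T c; apply=> // _ [h [k [hi [ki [Hh Kk hhi kki ->]]]]].
exact: HK_T.
Qed.

Section Commutators.
Variables (R : nzRingType) (p : nat) (A : int -> {pred R}).
Hypotheses (gA : graded_comm_Fp_alg p A) (p_prime : prime p).
Let p_gt1 : (1 < p)%N := prime_gt1 p_prime.
Let pchar : p%:R = 0 :> R := pcharf0 (gc_char gA).
Implicit Types a b h k hi ki : pseries R.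

Lemma is_ginv_gmul a b : is_ginv p A a b -> gmul p a b =1 gone R /\ gmul p b a =1 gone R.
Proof. by case=> _ _ ab ba; split=> i; rewrite ?ab ?ba. Qed.

Lemma subgroup_inG : subgroupG p A (inG p A).
Proof.
split=> //; [exact: (inG_gone gA) | | by move=> a b _ []].
by move=> a b; exact: (inG_gmul gA (prime_gt0 p_prime)).
Qed.

Lemma subgroup_Gk m : subgroupG p A (Gk p A m).
Proof.
split=> [a [] // | | a b [ia a0 az] [ib b0 bz] | a b [_ a0 az] ab].
- by split; [exact: (inG_gone gA) | | case].
- have a_id : id_upto m a by [].
  split; first exact: (inG_gmul gA (prime_gt0 p_prime)).
    by rewrite (gmul_id_upto_l p_gt1 _ a_id).
  by move=> i /andP [i0 im]; rewrite (gmul_id_upto_l p_gt1 _ a_id) // bz ?i0.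
- have [b0 bz] := id_upto_inv p_gt1 (conj a0 az) (is_ginv_gmul ab).1.
  by case: ab => _ ib _ _; split.
Qed.

Lemma subgroup_Gkh m : subgroupG p A (Gkh p A m).
Proof.
have [_ Gk1 Gk_mul Gk_inv] := subgroup_Gk m.
split=> [a [[]] // | | a b [Ga a1] [Gb b1] | a b [Ga a1] ab]; first by split.
- split; first exact: Gk_mul.
  case: Ga => _ a0 az; rewrite (gmul_id_upto_lead_l p_gt1 _ (conj a0 az)) ?leqnn //=.
  by rewrite a1 b1 mul0r addr0.
- split; first exact: Gk_inv ab.
  case: Ga => _ a0 az; have := id_upto_inv_lead p_gt1 (conj a0 az) (is_ginv_gmul ab).1.
  by move/(congr1 fst); rewrite /= a1 add0r.
Qed.

Lemma gcomm_mem S h k hi ki : subgroupG p A S -> S h -> S k ->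
  is_ginv p A h hi -> is_ginv p A k ki -> S (gcomm p hi ki h k).
Proof.
move=> [_ _ Smul Sinv] Sh Sk hhi kki.
exact: Smul _ _ (Smul _ _ (Smul _ _ (Sinv _ _ Sh hhi) (Sinv _ _ Sk kki)) Sh) Sk.
Qed.

Lemma gcomm_hom_eq0 (V : zmodType) (f : pseries R -> V) S h k hi ki :
  subgroupG p A S -> (forall a b, S a -> S b -> f (gmul p a b) = f a + f b) ->
  f (gone R) = 0 -> S h -> S k -> is_ginv p A h hi -> is_ginv p A k ki ->
  f (gcomm p hi ki h k) = 0.
Proof.
move=> [_ _ Smul Sinv] f_mul f1 Sh Sk hhi kki.
have f_inv a b : S a -> is_ginv p A a b -> f a + f b = 0.
  move=> Sa ab; have Sb := Sinv _ _ Sa ab.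
  by case: ab => _ _ ab _; rewrite -f_mul // ab.
have Shi := Sinv _ _ Sh hhi; have Ski := Sinv _ _ Sk kki.
have Shki := Smul _ _ Shi Ski; have Shkih := Smul _ _ Shki Sh.
rewrite /gcomm !f_mul //.
by rewrite -addrA addrACA (addrC (f hi)) (addrC (f ki)) !f_inv // addr0.
Qed.

Lemma gcomm_inG h k hi ki : inG p A h -> inG p A k ->
  is_ginv p A h hi -> is_ginv p A k ki -> Gkh p A 0 (gcomm p hi ki h k).
Proof.
move=> Gh Gk' hhi kki; set c := gcomm p hi ki h k.
have [c0 c_ok] : inG p A c by exact: gcomm_mem subgroup_inG Gh Gk' hhi kki.
have c0_eps : (c 0%N).2 = 0.
  apply: (gcomm_hom_eq0 (f := fun a => (a 0%N).2) subgroup_inG) => // a b [a0 _] [b0 _].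
  by rewrite gmul0 /dmul /= a0 b0 mul1r mulr1 addrC.
have c1 : (c 1%N).1 = 0.
  apply: (gcomm_hom_eq0 (f := fun a => (a 1%N).1) subgroup_inG) => // a b [a0 _] [b0 _].
  rewrite gmul_ends // => [|j /andP [j0 j1]]; last by exfalso; lia.
  by rewrite /dmul /= dexp_fst a0 b0 expr1n mulr1 mul1r.
split=> //; split=> // [|i]; first by rewrite [c 0%N]surjective_pairing c0 c0_eps.
by rewrite ltnNge andNb.
Qed.

Lemma gcomm_Gk_of_add S m h k hi ki : subgroupG p A S ->
  (forall a, S a -> a 0%N = (1, 0)) ->
  (forall i a b, (0 < i <= m)%N -> S a -> S b -> gmul p a b i = a i + b i) ->
  S h -> S k -> is_ginv p A h hi -> is_ginv p A k ki -> Gk p A m (gcomm p hi ki h k).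
Proof.
move=> sS S0 S_add Sh Sk hhi kki; have Sc := gcomm_mem sS Sh Sk hhi kki.
have [S_inG _ _ _] := sS; split; [exact: S_inG | exact: S0 | move=> i im].
apply: (gcomm_hom_eq0 (f := fun a => a i) sS) => // [a b Sa Sb|]; first exact: S_add.
by rewrite gone_gt0 //; case/andP: im.
Qed.

Lemma gcomm_Gkh0 h k hi ki : Gkh p A 0 h -> Gkh p A 0 k ->
  is_ginv p A h hi -> is_ginv p A k ki -> Gk p A 2 (gcomm p hi ki h k).
Proof.
apply: gcomm_Gk_of_add (subgroup_Gkh 0) _ _ => [a [[]] // | i a b i2 [[_ a0 _] a1] [[_ b0 _] _]].
exact: gmul_eps_add i2.
Qed.

Lemma gcomm_Gk_Gk m h k hi ki : (0 < m)%N -> Gk p A m h -> Gk p A m k ->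
  is_ginv p A h hi -> is_ginv p A k ki -> Gk p A m.+2 (gcomm p hi ki h k).
Proof.
move=> m0; apply: gcomm_Gk_of_add (subgroup_Gk m) _ _ => [a [] // | i a b im [_ a0 az] [_ b0 bz]].
exact: gmul_id_upto_add m0 (conj a0 az) (conj b0 bz) im.
Qed.

Lemma gcomm_Gk_inG m h k hi ki : Gk p A m h -> inG p A k ->
  is_ginv p A h hi -> is_ginv p A k ki -> Gkh p A m (gcomm p hi ki h k).
Proof.
move=> [Gh h0 hz] Gk' hhi kki; have h_id : id_upto m h by [].
have [[k0 _] [ki0 _] _ _] := kki.
have cG := gcomm_mem subgroup_inG Gh Gk' hhi kki.
have [hhi' _] := is_ginv_gmul hhi; have [_ kki'] := is_ginv_gmul kki.
have [[c0 cz] _] := gcomm_id_upto p_gt1 pchar h_id hhi' kki' ki0.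
by split; [split | exact: (gcomm_lead_fst p_gt1 pchar h_id hhi' kki' ki0 k0)].
Qed.

Lemma gcomm_Gkh_inG m h k hi ki : Gkh p A m h -> inG p A k ->
  is_ginv p A h hi -> is_ginv p A k ki -> Gkh p A m.+1 (gcomm p hi ki h k).
Proof.
move=> [Gmh h1] Gk' hhi kki; have [[Gc c0 cz] _] := gcomm_Gk_inG Gmh Gk' hhi kki.
case: Gmh => _ h0 hz; have h_id : id_upto m h by [].
have [[k0 _] [ki0 _] _ _] := kki.
have [hhi' _] := is_ginv_gmul hhi; have [_ kki'] := is_ginv_gmul kki.
have [_ czS] := id_uptoS (conj c0 cz) (gcomm_lead_eq0 p_gt1 pchar h_id hhi' kki' ki0 h1).
split; first by split.
rewrite gcomm_mod_eps_fst; apply: (gcomm_lead_fst p_gt1 pchar) ki0 k0.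
- exact: mod_eps_id_upto h_id h1.
- exact: mod_eps_inv hhi'.
- exact: mod_eps_inv kki'.
Qed.

End Commutators.

Theorem proposition3p2 (p : nat) (R : nzRingType) (A : int -> {pred R}) :
  prime p -> graded_comm_Fp_alg p A ->
  [/\ subsetP_ (commG p A (inG p A) (inG p A)) (Gkh p A 0),
      subsetP_ (commG p A (Gkh p A 0) (Gkh p A 0)) (Gk p A 2),
      (forall k, (0 < k)%N -> subsetP_ (commG p A (Gk p A k) (Gk p A k)) (Gk p A k.+2)),
      (forall k, subsetP_ (commG p A (Gk p A k) (inG p A)) (Gkh p A k))
    & (forall k, subsetP_ (commG p A (Gkh p A k) (inG p A)) (Gkh p A k.+1))].
Proof.
move=> p_prime gA; split=> [||k k_gt0|k|k]; apply: commG_sub => [|h k' hi ki].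
- exact: subgroup_Gkh.
- exact: gcomm_inG.
- exact: subgroup_Gk.
- exact: gcomm_Gkh0.
- exact: subgroup_Gk.
- exact: gcomm_Gk_Gk.
- exact: subgroup_Gkh.
- exact: gcomm_Gk_inG.
- exact: subgroup_Gkh.
- exact: gcomm_Gkh_inG.
Qed.
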